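(* Consider the many-server system described in the context under any load balancing policy for which the state process is an irreducible finite CTMC, and let $S$ be its stationary state. Let $\Delta=\frac{\log N}{\sqrt N}$, $\eta=\lambda+k\Delta$, $h(x)=\max\{x-\eta,0\}$ and $g'(x)=-\frac{\max\{x-\eta,0\}}{\Delta}$. Let $D_1=\sum_{m=1}^M w_m S_{1,m}$. Then $$\mathbb E\left[h\left(\sum_{i=1}^b S_i\right)\right]\leq J_1+\frac{5\mu_{\max}+\lambda}{\sqrt N\log N},$$ where $$J_1=\mathbb E\left[g'\left(\sum_{i=1}^bS_i\right)\bigl(\lambda A_b(S)-\lambda-\Delta+D_1\bigr)\mathbb I\Bigl\{\sum_{i=1}^bS_i>\eta+\tfrac1N\Bigr\}\right].$$
   Context: System: $N\ge2$ identical servers, each able to hold at most $b$ jobs ($b\ge1$ finite), FIFO; a job routed to a server holding $b$ jobs is discarded. Poisson arrivals of rate $\lambda N$, $\lambda=1-N^{-\alpha}$, $0<\alpha<1/2$. Service times i.i.d. Coxian with $M$ phases: phase $m$ exponential with rate $\mu_m>0$; after phase $m<M$ the job enters phase $m+1$ with probability $p_m\in[0,1)$, otherwise departs; after phase $M$ it departs. $v_m=\prod_{i=1}^{m-1}p_i/\mu_m$ with $\sum_mv_m=1$; $\bar v=\min_mv_m$. $S_{i,m}$ = fraction of servers with at least $i$ jobs whose job in service is in phase $m$, $S_i=\sum_mS_{i,m}$; the policy routes arrivals based on the current state. $A_b(s)$ = probability an incoming job is routed to a server with at least $b$ jobs given state $s$. Constants: $w_m=(1-p_m)\mu_m$ for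 $m<M$, $w_M=\mu_M$; $w_u=\max_mw_m$, $w_l=\min_mw_m$, $\mu_{\max}=\max_m\mu_m$; for $2\le m\le M$, $a_m=\frac{\mu_m}{p_1\mu_1+\mu_m}$, $b_m=(1-a_m)(1+\sum_{r=m+1}^M\frac{v_r}{v_1})-\frac{a_mv_m}{v_1}$; $\xi=\sum_{m=2}^Mb_m\prod_{j=m+1}^Ma_j$ (asserted $0<\xi<1$), $C=\sqrt{\frac{2\bar v^2\log(1/\xi)}{3M+(3M+4)\log(1/\xi)}}$, $\theta_m=\frac{6\mu_1v_m+5(m-1)v_m}{C}$, $\zeta=\frac{4w_ub}{w_l}\bigl[(\frac1{w_l}-\frac1{w_u})\sum_m\theta_mw_m+\frac1{w_l}+6\bigr]$, $k=\frac{\sum_m\theta_mw_m}{w_u}+(1+\frac{w_l}{4w_ub})\zeta-\sum_m\theta_m$. *)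

From HB Require Import structures.
From mathcomp Require Import all_boot all_order all_algebra.
From mathcomp Require Import all_classical all_reals all_analysis.
Set Implicit Arguments. Unset Strict Implicit. Unset Printing Implicit Defensive.
Import Order.TTheory GRing.Theory Num.Theory.
Local Open Scope ring_scope.

Section Model.
Variable R : realType.

Variables (N b M : nat).
Variables (mu p : nat -> R).

Definition vv (m : nat) : R := (\prod_(1 <= i < m) p i) / mu m.
Definition vbar : R := \big[Num.min/vv 1]_(1 <= m < M.+1) vv m.
Definition ww (m : nat) : R := if (m < M)%N then (1 - p m) * mu m else mu m.
Definition wu : R := \big[Num.max/ww 1]_(1 <= m < M.+1) ww m.
Definition wl : R := \big[Num.min/ww 1]_(1 <= m < M.+1) ww m.
Definition mumax : R := \big[Num.max/mu 1]_(1 <= m < M.+1) mu m.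
Definition aa (m : nat) : R := mu m / (p 1 * mu 1 + mu m).
Definition bb (m : nat) : R :=
  (1 - aa m) * (1 + \sum_(m.+1 <= r < M.+1) vv r / vv 1) - aa m * vv m / vv 1.
Definition xi : R :=
  \sum_(2 <= m < M.+1) bb m * \prod_(m.+1 <= j < M.+1) aa j.
Definition Cc : R :=
  Num.sqrt (2 * vbar ^+ 2 * ln (xi^-1) /
            (3 * M%:R + (3 * M%:R + 4) * ln (xi^-1))).
Definition theta (m : nat) : R :=
  (6 * mu 1 * vv m + 5 * (m.-1)%:R * vv m) / Cc.
Definition sum_theta_w : R := \sum_(1 <= m < M.+1) theta m * ww m.
Definition sum_theta : R := \sum_(1 <= m < M.+1) theta m.
Definition zeta (b : nat) : R :=
  4 * wu * b%:R / wl * ((wl^-1 - wu^-1) * sum_theta_w + wl^-1 + 6).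
Definition kconst (b : nat) : R :=
  sum_theta_w / wu + (1 + wl / (4 * wu * b%:R)) * zeta b - sum_theta.

(* A state records, for each class k = (j, m0) : 'I_b * 'I_M, the number of
   servers holding exactly j+1 jobs whose job in service is in phase m0+1.
   The number of empty servers is N minus the total. *)

Definition cfgpred (c : {ffun 'I_b * 'I_M -> 'I_N.+1}) : bool :=
  (\sum_k (c k : nat) <= N)%N.
Definition cfg := {c : {ffun 'I_b * 'I_M -> 'I_N.+1} | cfgpred c}.

Definition cnt (x : cfg) (k : 'I_b * 'I_M) : nat := val (val x k).

(* S_{i,m} (paper indices i in 1..b, m in 1..M) *)
Definition Sim (x : cfg) (i m : nat) : R :=
  (\sum_(k : 'I_b * 'I_M | (i <= k.1.+1)%N && (k.2.+1 == m)%N) cnt x k)%:R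
  / N%:R.
Definition Si (x : cfg) (i : nat) : R := \sum_(1 <= m < M.+1) Sim x i m.
Definition Ssum (x : cfg) : R := \sum_(1 <= i < b.+1) Si x i.
Definition D1 (x : cfg) : R := \sum_(1 <= m < M.+1) ww m * Sim x 1 m.

(* route x None     = prob. that an arrival in state x goes to an empty server
   route x (Some k) = prob. that it goes to a server of class k *)
Definition valid_policy (route : cfg -> option ('I_b * 'I_M) -> R) : Prop :=
  forall x,
    (forall o, 0 <= route x o) /\ \sum_o route x o = 1 /\
    (0 < route x None -> (\sum_k cnt x k < N)%N) /\
    (forall k, 0 < route x (Some k) -> (0 < cnt x k)%N).

Definition Ab (route : cfg -> option ('I_b * 'I_M) -> R) (x : cfg) : R :=
  \sum_(k : 'I_b * 'I_M | (k.1.+1 == b)%N) route x (Some k).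

Definition ev (j m : nat) (k : 'I_b * 'I_M) : int :=
  (nat_of_bool ((k.1 == j :> nat) && (k.2 == m :> nat)))%:Z.
Definition shift (x y : cfg) (d : 'I_b * 'I_M -> int) : bool :=
  [forall k, (cnt y k)%:Z == (cnt x k)%:Z + d k].

(* Transition rate from x to y (x <> y); lam N = total arrival rate. *)
Definition Qrate (lam : R) (route : cfg -> option ('I_b * 'I_M) -> R)
    (x y : cfg) : R :=
  (* arrival routed to an empty server: it starts service in phase 1 *)
  lam * N%:R * route x None * (shift x y (ev 0 0) : nat)%:R
  (* arrival routed to a non-full busy server (full ones discard the job) *)
  + \sum_(k : 'I_b * 'I_M | (k.1.+1 < b)%N)
      lam * N%:R * route x (Some k) *
      (shift x y (fun l => ev k.1.+1 k.2 l - ev k.1 k.2 l) : nat)%:R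
  (* phase completion m -> m+1 (m < M) *)
  + \sum_(k : 'I_b * 'I_M | (k.2.+1 < M)%N)
      mu k.2.+1 * p k.2.+1 * (cnt x k)%:R *
      (shift x y (fun l => ev k.1 k.2.+1 l - ev k.1 k.2 l) : nat)%:R
  (* job departure; the next job (if any) starts in phase 1 *)
  + \sum_(k : 'I_b * 'I_M)
      ww k.2.+1 * (cnt x k)%:R *
      (shift x y (fun l => (if (0 < k.1)%N then ev k.1.-1 0 l else 0)
                           - ev k.1 k.2 l) : nat)%:R.

Definition irreducible (Q : cfg -> cfg -> R) : Prop :=
  forall x y, connect (fun x y => 0 < Q x y) x y.

Definition stationary (Q : cfg -> cfg -> R) (pi : cfg -> R) : Prop :=
  (forall x, 0 <= pi x) /\ \sum_x pi x = 1 /\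
  (forall y, \sum_x pi x * Q x y = pi y * \sum_z Q y z).

End Model.

Definition lamN {R : realType} (N : nat) (alpha : R) : R :=
  1 - (N%:R : R) `^ (- alpha).
Definition DeltaN (R : realType) (N : nat) : R :=
  ln (N%:R : R) / Num.sqrt (N%:R : R).

Definition bool_ind {R : realType} (P : bool) : R := (nat_of_bool P)%:R.

(* Apply the stationarity identity E[(Q f)(S)] = 0 to the test function
   f(s) = -h(sum_i s_i)^2 / (2 Delta), whose derivative is g'.  An accepted
   arrival raises sum_i S_i by 1/N, a departure lowers it by 1/N and a phase
   change leaves it fixed, so the Taylor bound
   f(a + t) - f(a) >= g'(a) t - t^2 / (2 Delta) bounds the drift of f below by
   g'(sum_i S_i) (lambda (1 - A_b) - D_1) minus O(1 / (N Delta)).  As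
   -Delta g' = h, this lower bound dominates h pointwise up to the error term:
   on {sum_i S_i > eta + 1/N} the terms in g' cancel against J_1, and off that
   event h <= 1/N. *)

From Pilot Require Import Defs.
From HB Require Import structures.
From mathcomp Require Import all_boot all_order all_algebra.
From mathcomp Require Import all_classical all_reals all_analysis.
From mathcomp Require Import ring lra zify.
Set Implicit Arguments. Unset Strict Implicit. Unset Printing Implicit Defensive.
Import Order.TTheory GRing.Theory Num.Theory.
Local Open Scope ring_scope.

Local Notation shift := Defs.shift.

Lemma big_option (R : nmodType) (T : finType) (F : option T -> R) :
  \sum_o F o = F None + \sum_x F (Some x).
Proof.
rewrite (bigD1 None) //=; congr (_ + _).
rewrite (reindex_omap Some id) => [|[]//].
by apply: eq_bigl => x; rewrite eqxx.
Qed.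

Lemma sumr_exchange_mul (R : pzSemiRingType) (K T : finType) (P : pred K) (c : K -> R)
    (s : K -> T -> R) (G : T -> R) :
  \sum_y (\sum_(k | P k) c k * s k y) * G y = \sum_(k | P k) c k * \sum_y s k y * G y.
Proof.
under eq_bigr do rewrite mulr_suml.
rewrite exchange_big /=; apply: eq_bigr => k _.
by rewrite mulr_sumr; apply: eq_bigr => y _; rewrite mulrA.
Qed.

Section Jumps.
Variables (R : realType) (N b M : nat).
Local Notation cfg := (cfg N b M).
Local Notation class := ('I_b * 'I_M)%type.
Implicit Types (x y z : cfg) (d : class -> int) (F : cfg -> R).

Lemma stationary_drift_eq0 (Q : cfg -> cfg -> R) pi F : stationary Q pi ->
  \sum_x pi x * \sum_y Q x y * (F y - F x) = 0.
Proof.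
move=> [_ [_ balance]].
have -> : \sum_x pi x * \sum_y Q x y * (F y - F x) =
    \sum_x \sum_y pi x * Q x y * F y - \sum_y pi y * (\sum_z Q y z) * F y.
  rewrite -sumrB; apply: eq_bigr => x _.
  by rewrite !mulr_sumr mulr_suml -sumrB; apply: eq_bigr => y _; ring.
apply/eqP; rewrite subr_eq0 exchange_big /=; apply/eqP/eq_bigr => y _.
by rewrite -balance -mulr_suml.
Qed.

Lemma shift_inj x y z d : shift x y d -> shift x z d -> y = z.
Proof.
move=> /forallP sy /forallP sz; apply/val_inj/ffunP => k; apply: val_inj.
by apply/eqP; rewrite -eqz_nat (eqP (sy k)) (eqP (sz k)).
Qed.

Lemma shift_exists x d : (forall l, 0 <= (cnt x l)%:Z + d l) ->
  \sum_l ((cnt x l)%:Z + d l) <= N%:Z -> exists y, shift x y d.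
Proof.
move=> ge0 sum_le.
pose n l := absz ((cnt x l)%:Z + d l).
have nE l : (n l)%:Z = (cnt x l)%:Z + d l by rewrite /n gez0_abs.
have sum_n : (\sum_l n l <= N)%N.
  rewrite -lez_nat (big_morph Posz PoszD (erefl _)).
  by under eq_bigr do rewrite nE.
have n_lt l : (n l < N.+1)%N.
  by rewrite ltnS (leq_trans _ sum_n) // (bigD1 l) //= leq_addr.
pose c : {ffun class -> 'I_N.+1} := [ffun l => inord (n l)].
have c_ok : cfgpred c.
  by rewrite /cfgpred (eq_bigr n) // => l _; rewrite ffunE inordK.
exists (Sub c c_ok); apply/forallP => l.
by rewrite /cnt /= ffunE inordK // nE.
Qed.

Definition jump_diff F x d : R :=
  \sum_y (shift x y d : nat)%:R * (F y - F x).

Lemma jump_diffE F x y d : shift x y d -> jump_diff F x d = F y - F x.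
Proof.
move=> sy; rewrite /jump_diff (bigD1 y) //= sy mul1r big1 ?addr0 // => z nzy.
case sz: (shift x z d); last by rewrite mul0r.
by rewrite (shift_inj sz sy) eqxx in nzy.
Qed.

Lemma jump_diff_eq0 F x d :
  (forall y, shift x y d -> F y = F x) -> jump_diff F x d = 0.
Proof.
move=> Fy; rewrite /jump_diff big1 // => y _.
case sy: (shift x y d); last by rewrite mul0r.
by rewrite Fy // subrr mulr0.
Qed.

Lemma ler_jump_diff F x d (a r L : R) : 0 <= a -> 0 <= r ->
  (0 < r -> exists y, shift x y d) ->
  (forall y, shift x y d -> L <= F y - F x) ->
  a * r * L <= a * r * jump_diff F x d.
Proof.
move=> a_ge0; rewrite le0r => /orP [/eqP -> | r_gt0] target lb.
  by rewrite mulr0 !mul0r.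
have [y sy] := target r_gt0.
rewrite (jump_diffE F sy); apply: ler_wpM2l; last exact: lb.
exact: mulr_ge0 a_ge0 (ltW r_gt0).
Qed.

Lemma evE (k l : class) : ev k.1 k.2 l = (l == k : nat)%:Z.
Proof. by rewrite /ev; congr (Posz (nat_of_bool _)). Qed.

Lemma sum_ev (k : class) : \sum_(l : class) ev k.1 k.2 l = 1.
Proof.
by rewrite (bigD1 k) //= evE eqxx big1 ?addr0 // => l /negbTE; rewrite evE => ->.
Qed.

Lemma sum_ev_le1 j m : \sum_(l : class) ev j m l <= 1.
Proof.
have [k /andP [/eqP <- /eqP <-] | none] :=
  pickP (fun l : class => (l.1 == j :> nat) && (l.2 == m :> nat)).
  by rewrite sum_ev.
by rewrite big1 // => l _; rewrite /ev none.
Qed.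

Definition level_change d : R := \sum_l (d l)%:~R * (l.1.+1)%:R.

Lemma level_changeB d1 d2 :
  level_change (fun l => d1 l - d2 l) = level_change d1 - level_change d2.
Proof. by rewrite -sumrB; apply: eq_bigr => l _; rewrite intrB mulrBl. Qed.

Lemma level_change_ev (k : class) : level_change (ev k.1 k.2) = k.1.+1%:R.
Proof.
rewrite /level_change (bigD1 k) //= evE eqxx mul1r big1 ?addr0 //.
by move=> l /negbTE; rewrite evE => ->; rewrite mul0r.
Qed.

Lemma sum_phase_partition (G : nat -> R) (P : pred class) (c : class -> R) :
  \sum_(1 <= m < M.+1) G m * \sum_(k | P k && (k.2.+1 == m)%N) c k
  = \sum_(k | P k) G k.2.+1 * c k.
Proof.
rewrite (partition_big snd xpredT) //= big_add1 /= big_mkord.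
apply: eq_bigr => m _; rewrite mulr_sumr.
by apply: eq_big => [k | k /andP [_ /eqP ->]].
Qed.

Lemma SimE x i m :
  Sim R x i m =
    (\sum_(k : class | (i <= k.1.+1)%N && (k.2.+1 == m)%N) (cnt x k)%:R) / N%:R.
Proof. by rewrite /Sim natr_sum. Qed.

Lemma SiE x i : Si R x i = (\sum_(k : class | (i <= k.1.+1)%N) (cnt x k)%:R) / N%:R.
Proof.
rewrite /Si; under eq_bigr do rewrite SimE -[X in X / _]mul1r.
by rewrite -mulr_suml (sum_phase_partition (fun=> 1)); under eq_bigr do rewrite mul1r.
Qed.

Lemma SsumE x : Ssum R x = (\sum_k (cnt x k)%:R * (k.1.+1)%:R) / N%:R.
Proof.
rewrite /Ssum; under eq_bigr do rewrite SiE.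
rewrite -mulr_suml; congr (_ / _).
under eq_bigr do rewrite big_mkcond /=.
rewrite exchange_big /=; apply: eq_bigr => k _; rewrite -big_mkcond /=.
transitivity (\sum_(1 <= i < k.1.+2) (cnt x k)%:R : R).
  by rewrite [RHS](big_nat_widen _ _ b.+1) // ltnS.
by rewrite sumr_const_nat mulr_natr.
Qed.

Lemma D1E (mu p : nat -> R) x :
  D1 mu p x = (\sum_(k : class) ww M mu p k.2.+1 * (cnt x k)%:R) / N%:R.
Proof.
rewrite /D1; under eq_bigr do rewrite SimE mulrA.
by rewrite -mulr_suml sum_phase_partition.
Qed.

Lemma Ssum_shift x y d : shift x y d ->
  Ssum R y = Ssum R x + level_change d / N%:R.
Proof.
move=> /forallP sy; rewrite !SsumE -mulrDl -big_split /=; congr (_ / _).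
apply: eq_bigr => k _; rewrite -mulrDl; congr (_ * _).
by rewrite -[_%:R]/((cnt y k)%:Z%:~R) (eqP (sy k)) intrD.
Qed.

Lemma sum_cnt_le x : \sum_l (cnt x l)%:Z <= N%:Z.
Proof. by rewrite -(big_morph Posz PoszD (erefl _)) lez_nat; case: x. Qed.

Lemma shift_arrival_exists x : (\sum_l cnt x l < N)%N -> exists y, shift x y (ev 0 0).
Proof.
move=> cnt_lt; apply: shift_exists => [l|]; first exact: addr_ge0.
rewrite big_split /= (le_trans (lerD (lexx _) (sum_ev_le1 0 0))) //.
by rewrite -(big_morph Posz PoszD (erefl _)) -PoszD lez_nat addn1.
Qed.

Lemma shift_move_exists x (k : class) e : (0 < cnt x k)%N ->
  (forall l, 0 <= e l) -> \sum_l e l <= 1 ->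
  exists y, shift x y (fun l => e l - ev k.1 k.2 l).
Proof.
move=> cnt_gt0 e_ge0 sum_e; apply: shift_exists => [l|].
  rewrite evE; have := e_ge0 l; case: eqVneq => [-> | _] /=.
    by move: cnt_gt0; rewrite -ltz_nat; lia.
  by rewrite subr0; apply: addr_ge0.
rewrite big_split /= sumrB sum_ev; apply: le_trans (sum_cnt_le x).
by rewrite gerDl subr_le0.
Qed.

End Jumps.

Section QuadraticTest.
Variables (R : realType) (eta Delta : R).

Definition gquad (t : R) : R := - (Num.max (t - eta) 0) ^+ 2 / (2 * Delta).
Definition gquad' (t : R) : R := - Num.max (t - eta) 0 / Delta.

Lemma gquad_taylor a t : 0 < Delta ->
  gquad' a * t - t ^+ 2 / (2 * Delta) <= gquad (a + t) - gquad a.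
Proof.
move=> Delta_gt0; rewrite /gquad /gquad'.
set u := Num.max (a - eta) 0; set v := Num.max (a + t - eta) 0.
have u_ge0 : 0 <= u by rewrite le_max lexx orbT.
have u_ge : a - eta <= u by rewrite le_max lexx.
have v2_le : v ^+ 2 <= (u + t) ^+ 2.
  rewrite /v; case: (leP (a + t - eta) 0) => [_|]; first by rewrite expr0n sqr_ge0.
  nra.
rewrite -subr_ge0.
have -> : - v ^+ 2 / (2 * Delta) - - u ^+ 2 / (2 * Delta)
    - (- u / Delta * t - t ^+ 2 / (2 * Delta))
  = ((u + t) ^+ 2 - v ^+ 2) / (2 * Delta) by field; rewrite gt_eqF.
by rewrite divr_ge0 ?subr_ge0 //; lra.
Qed.

End QuadraticTest.

Section ServiceRates.
Variables (R : realType) (M : nat) (mu p : nat -> R).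
Hypotheses (mu_gt0 : forall m, (1 <= m <= M)%N -> 0 < mu m)
  (p_prob : forall m, (1 <= m < M)%N -> 0 <= p m < 1)
  (M_gt0 : (0 < M)%N) (sum_vv : \sum_(1 <= m < M.+1) vv mu p m = 1).

Lemma ww_ge0 m : (1 <= m <= M)%N -> 0 <= ww M mu p m.
Proof.
move=> /andP [m_ge1 m_le]; have mu_m : 0 < mu m by rewrite mu_gt0 ?m_ge1.
rewrite /ww; case: ifP => m_lt.
  have /andP [_ p_lt1] : 0 <= p m < 1 by rewrite p_prob ?m_ge1.
  by rewrite mulr_ge0 ?subr_ge0 ?(ltW p_lt1) ?(ltW mu_m).
exact: ltW mu_m.
Qed.

Lemma ww_le_mu m : (1 <= m <= M)%N -> ww M mu p m <= mu m.
Proof.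
move=> /andP [m_ge1 m_le]; have mu_m : 0 < mu m by rewrite mu_gt0 ?m_ge1.
rewrite /ww; case: ifP => m_lt //.
have /andP [p_ge0 _] : 0 <= p m < 1 by rewrite p_prob ?m_ge1.
by rewrite mulrBl mul1r gerBl mulr_ge0 ?(ltW mu_m).
Qed.

Lemma mu_le_mumax m : (1 <= m <= M)%N -> mu m <= mumax M mu.
Proof.
move=> m_range; apply: (le_bigmax_seq (mu 1) m xpredT mu) => //.
by rewrite mem_index_iota ltnS.
Qed.

Lemma mu1_ge1 : 1 <= mu 1.
Proof.
have v1_le1 : vv mu p 1 <= 1.
  rewrite -sum_vv big_ltn // lerDl big_nat_cond.
  apply: sumr_ge0 => m /andP [/andP [m_gt1 m_le] _].
  have mu_m : 0 < mu m by apply: mu_gt0; rewrite (ltnW m_gt1) -ltnS.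
  rewrite divr_ge0 ?(ltW mu_m) // big_nat_cond.
  apply: prodr_ge0 => i /andP [/andP [i_ge1 i_lt] _].
  by have /andP [] : 0 <= p i < 1 by rewrite p_prob // i_ge1 (leq_trans i_lt).
by move: v1_le1; rewrite /vv big_geq // div1r invf_le1 // mu_gt0.
Qed.

Lemma D1_bounds N b (x : cfg N b M) : (0 < N)%N ->
  0 <= D1 mu p x <= mumax M mu.
Proof.
move=> N_gt0; have N_pos : (0 : R) < N%:R by rewrite ltr0n.
have one_range : (1 <= 1 <= M)%N by rewrite leqnn M_gt0.
have mumax_ge0 := le_trans (ltW (mu_gt0 one_range)) (mu_le_mumax one_range).
have ww_k (k : 'I_b * 'I_M) :
    0 <= ww M mu p k.2.+1 /\ ww M mu p k.2.+1 <= mumax M mu.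
  have k_range : (1 <= k.2.+1 <= M)%N by rewrite ltn_ord.
  split; first exact: ww_ge0.
  exact: le_trans (ww_le_mu k_range) (mu_le_mumax k_range).
rewrite D1E; apply/andP; split.
  apply: divr_ge0; last exact: ltW.
  by apply: sumr_ge0 => k _; rewrite mulr_ge0 //; case: (ww_k k).
rewrite ler_pdivrMr // (@le_trans _ _ (\sum_k mumax M mu * (cnt x k)%:R)) //.
  by apply: ler_sum => k _; rewrite ler_wpM2r //; case: (ww_k k).
by rewrite -mulr_sumr ler_wpM2l // -natr_sum ler_nat; case: x.
Qed.

End ServiceRates.

(* [I] stands for the indicator in [J1]; where it vanishes, [u = h <= 1/n]. *)
Lemma quadratic_drift_ineq (R : realFieldType) (u Delta n lam A D mu I : R) :
  0 < Delta -> Delta <= 2 -> 1 <= n -> 0 <= lam <= 1 -> 0 <= A ->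
  0 <= D <= mu -> 1 <= mu -> 0 <= u -> I = 1 \/ (I = 0 /\ u * n <= 1) ->
  u <= (- u / Delta) * (lam * A - lam - Delta + D) * I + (5 * mu + lam) / (n * Delta)
    + (lam * n * (1 - A) * ((- u / Delta) * (1 / n) - (1 / n) ^+ 2 / (2 * Delta))
       + n * D * ((- u / Delta) * (-1 / n) - (-1 / n) ^+ 2 / (2 * Delta))).
Proof.
move=> Delta_gt0 Delta_le2 n_ge1 /andP [lam_ge0 lam_le1] A_ge0 /andP [D_ge0 D_le]
  mu_ge1 u_ge0 I_cases.
rewrite -subr_ge0; set w := u * n in I_cases *.
have -> : (- u / Delta) * (lam * A - lam - Delta + D) * I + (5 * mu + lam) / (n * Delta)
    + (lam * n * (1 - A) * ((- u / Delta) * (1 / n) - (1 / n) ^+ 2 / (2 * Delta))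
       + n * D * ((- u / Delta) * (-1 / n) - (-1 / n) ^+ 2 / (2 * Delta))) - u
  = (- 2 * w * (lam * A - lam - Delta + D) * I + 2 * (5 * mu + lam)
     - lam * (1 - A) * (2 * w + 1) + D * (2 * w - 1) - 2 * w * Delta)
    / (2 * Delta * n).
  by rewrite /w; field; apply/andP; split; apply/eqP; lra.
apply: divr_ge0; last by rewrite !mulr_ge0 //; lra.
have w_ge0 : 0 <= w by rewrite mulr_ge0 //; lra.
clearbody w; have lamA_ge0 : 0 <= lam * A by rewrite mulr_ge0.
case: I_cases => [-> | [-> w_le1]]; first by nra.
have lamA_w : 0 <= lam * A * (2 * w + 1) by rewrite mulr_ge0 //; lra.
have lam_w : lam * w <= lam by nra.
have D_w : 0 <= D * w by rewrite mulr_ge0.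
have w_Delta : w * Delta <= 2 by nra.
nra.
Qed.

Section Drift.
Variables (R : realType) (N b M : nat) (mu p : nat -> R) (lam eta Delta : R)
  (route : cfg N b M -> option ('I_b * 'I_M) -> R).
Hypotheses (N_gt0 : (0 < N)%N) (b_gt0 : (0 < b)%N) (M_gt0 : (0 < M)%N)
  (mu_gt0 : forall m, (1 <= m <= M)%N -> 0 < mu m)
  (p_prob : forall m, (1 <= m < M)%N -> 0 <= p m < 1)
  (lam_ge0 : 0 <= lam) (Delta_gt0 : 0 < Delta) (route_ok : valid_policy route).
Local Notation cfg := (cfg N b M).
Local Notation class := ('I_b * 'I_M)%type.
Local Notation F := (fun y : cfg => gquad eta Delta (Ssum R y)).
Local Notation Q := (Qrate mu p lam route).
Implicit Types (x y : cfg) (k : class).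

Definition taylor_lb x (t : R) : R :=
  gquad' eta Delta (Ssum R x) * (t / N%:R) - (t / N%:R) ^+ 2 / (2 * Delta).

Lemma jump_ge_taylor x y d t : shift x y d -> level_change R d = t ->
  taylor_lb x t <= F y - F x.
Proof. by move=> sy dt; rewrite /= (Ssum_shift R sy) dt; apply: gquad_taylor. Qed.

Lemma Qrate_drift x : \sum_y Q x y * (F y - F x) =
    lam * N%:R * route x None * jump_diff F x (ev 0 0)
  + \sum_(k : class | (k.1.+1 < b)%N) lam * N%:R * route x (Some k) *
      jump_diff F x (fun l => ev k.1.+1 k.2 l - ev k.1 k.2 l)
  + \sum_(k : class | (k.2.+1 < M)%N) mu k.2.+1 * p k.2.+1 * (cnt x k)%:R *
      jump_diff F x (fun l => ev k.1 k.2.+1 l - ev k.1 k.2 l)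
  + \sum_(k : class) ww M mu p k.2.+1 * (cnt x k)%:R *
      jump_diff F x (fun l => (if (0 < k.1)%N then ev k.1.-1 0 l else 0)
                              - ev k.1 k.2 l).
Proof.
rewrite /Qrate /jump_diff; under eq_bigr do rewrite !mulrDl.
rewrite !big_split /= !sumr_exchange_mul mulr_sumr.
by congr (_ + _ + _ + _); apply: eq_bigr => y _; rewrite mulrA.
Qed.

Lemma arrival_empty_lb x :
  lam * N%:R * route x None * taylor_lb x 1
  <= lam * N%:R * route x None * jump_diff F x (ev 0 0).
Proof.
have [route_ge0 [_ [route_None _]]] := route_ok x.
apply: ler_jump_diff => //; first by rewrite mulr_ge0.
  by move=> /route_None; apply: shift_arrival_exists.
move=> y sy; apply: jump_ge_taylor sy _.
by rewrite (level_change_ev R (Ordinal b_gt0, Ordinal M_gt0)).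
Qed.

Lemma arrival_busy_lb x k : (k.1.+1 < b)%N ->
  lam * N%:R * route x (Some k) * taylor_lb x 1
  <= lam * N%:R * route x (Some k) *
     jump_diff F x (fun l => ev k.1.+1 k.2 l - ev k.1 k.2 l).
Proof.
move=> k1_lt; have [route_ge0 [_ [_ route_Some]]] := route_ok x.
apply: ler_jump_diff => //; first by rewrite mulr_ge0.
  move=> /route_Some cnt_gt0; apply: shift_move_exists => //.
  exact: sum_ev_le1.
move=> y sy; apply: jump_ge_taylor sy _.
rewrite level_changeB (level_change_ev R (Ordinal k1_lt, k.2)).
by rewrite (level_change_ev R k) -natr1 addrAC subrr add0r.
Qed.

Lemma phase_change_eq0 x k : (k.2.+1 < M)%N ->
  jump_diff F x (fun l => ev k.1 k.2.+1 l - ev k.1 k.2 l) = 0.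
Proof.
move=> k2_lt; apply: jump_diff_eq0 => y sy /=.
rewrite (Ssum_shift R sy) level_changeB (level_change_ev R (k.1, Ordinal k2_lt)).
by rewrite (level_change_ev R k) subrr mul0r addr0.
Qed.

Lemma departure_lb x k :
  ww M mu p k.2.+1 * (cnt x k)%:R * taylor_lb x (-1)
  <= ww M mu p k.2.+1 * (cnt x k)%:R *
     jump_diff F x (fun l => (if (0 < k.1)%N then ev k.1.-1 0 l else 0)
                             - ev k.1 k.2 l).
Proof.
apply: ler_jump_diff => //; first by rewrite (ww_ge0 mu_gt0 p_prob) ?ltn_ord.
  rewrite ltr0n => cnt_gt0; apply: shift_move_exists => // [l|]; first by case: ifP.
  by case: (0 < k.1)%N; [exact: sum_ev_le1 | rewrite big1].
move=> y sy; apply: jump_ge_taylor sy _.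
rewrite level_changeB (level_change_ev R k).
have [k1_0 | k1_gt0] := posnP k.1.
  by rewrite k1_0 /level_change big1 ?sub0r // => l _; rewrite mul0r.
have k1_lt : (k.1.-1 < b)%N by rewrite (leq_ltn_trans (leq_pred _)).
rewrite (level_change_ev R (Ordinal k1_lt, Ordinal M_gt0)) prednK //.
by rewrite -natr1 opprD addrA subrr sub0r.
Qed.

Lemma route_not_full x :
  route x None + \sum_(k : class | (k.1.+1 < b)%N) route x (Some k) = 1 - Ab route x.
Proof.
have [_ [route_sum1 _]] := route_ok x.
have Ab_full : Ab route x = \sum_(k : class | ~~ (k.1.+1 < b)%N) route x (Some k).
  by apply: eq_bigl => k; rewrite -leqNgt eqn_leq ltn_ord.
rewrite Ab_full -route_sum1 big_option.
by rewrite [in RHS](bigID (fun k : class => (k.1.+1 < b)%N)) /=; ring.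
Qed.

Definition drift_minorant x : R :=
  lam * N%:R * (1 - Ab route x) * taylor_lb x 1 + N%:R * D1 mu p x * taylor_lb x (-1).

Lemma drift_minorant_le x : drift_minorant x <= \sum_y Q x y * (F y - F x).
Proof.
have arrivals L : lam * N%:R * (1 - Ab route x) * L = lam * N%:R * route x None * L
    + \sum_(k : class | (k.1.+1 < b)%N) lam * N%:R * route x (Some k) * L.
  by rewrite -route_not_full mulrDr mulrDl mulr_sumr mulr_suml.
have departures L : N%:R * D1 mu p x * L
    = \sum_(k : class) ww M mu p k.2.+1 * (cnt x k)%:R * L.
  by rewrite D1E [N%:R * _]mulrC divfK ?mulr_suml // pnatr_eq0 -lt0n.
rewrite /drift_minorant Qrate_drift arrivals departures.
rewrite [X in _ <= _ + X + _]big1 ?addr0 => [|k /phase_change_eq0 ->]; last first.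
  by rewrite mulr0.
apply: lerD; [apply: lerD|].
- exact: arrival_empty_lb.
- by apply: ler_sum => k; exact: arrival_busy_lb.
- by apply: ler_sum => k _; exact: departure_lb.
Qed.

Lemma mean_drift_minorant_le0 pi : stationary Q pi ->
  \sum_x pi x * drift_minorant x <= 0.
Proof.
move=> pi_stat; rewrite -[X in _ <= X](stationary_drift_eq0 F pi_stat).
apply: ler_sum => x _; apply: ler_wpM2l; last exact: drift_minorant_le.
by case: pi_stat.
Qed.

Lemma drift_comparison x : lam <= 1 -> Delta <= 2 ->
  \sum_(1 <= m < M.+1) vv mu p m = 1 ->
  Num.max (Ssum R x - eta) 0 <=
    gquad' eta Delta (Ssum R x) * (lam * Ab route x - lam - Delta + D1 mu p x)
      * bool_ind (eta + N%:R^-1 < Ssum R x)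
    + (5 * mumax M mu + lam) / (N%:R * Delta) + drift_minorant x.
Proof.
move=> lam_le1 Delta_le2 sum_vv.
have N_pos : (0 : R) < N%:R by rewrite ltr0n.
have A_ge0 : 0 <= Ab route x.
  by apply: sumr_ge0 => k _; case: (route_ok x) => route_ge0 _; apply: route_ge0.
have one_range : (1 <= 1 <= M)%N by rewrite leqnn M_gt0.
have mumax_ge1 :=
  le_trans (mu1_ge1 mu_gt0 p_prob M_gt0 sum_vv) (mu_le_mumax mu one_range).
have D1_range := D1_bounds mu_gt0 p_prob M_gt0 x N_gt0.
rewrite /drift_minorant /taylor_lb /gquad'.
apply: quadratic_drift_ineq => //; rewrite ?lam_ge0 ?ler1n ?le_max ?lexx ?orbT //.
rewrite /bool_ind; case: ltP => [_|near_eta]; [by left | right; split => //].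
rewrite -ler_pdivlMr // mul1r ge_max invr_ge0 (ltW N_pos) andbT; lra.
Qed.

End Drift.

Lemma lamN_bounds (R : realType) N (alpha : R) : (0 < N)%N -> 0 <= alpha ->
  0 <= lamN N alpha <= 1.
Proof.
move=> N_gt0 alpha_ge0; rewrite /lamN gerBl powR_ge0 andbT subr_ge0.
by rewrite -[leRHS](powRr0 N%:R) ler_powR ?ler1n // oppr_le0.
Qed.

Lemma DeltaN_facts (R : realType) N : (2 <= N)%N ->
  [/\ 0 < DeltaN R N, DeltaN R N <= 2 &
      Num.sqrt (N%:R : R) * ln (N%:R : R) = N%:R * DeltaN R N].
Proof.
move=> N_ge2; have N_gt1 : (1 : R) < N%:R by rewrite ltr1n.
set s := Num.sqrt (N%:R : R); set l := ln (N%:R : R).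
have s_gt0 : 0 < s by rewrite sqrtr_gt0; lra.
have ss : s * s = N%:R by rewrite -expr2 sqr_sqrtr //; lra.
have l_gt0 : 0 < l by apply: ln_gt0.
have ln_s_le : ln s <= s - 1.
  have one_add_s : 1 + (s - 1) = s by ring.
  by have := @le_ln1Dx R (s - 1); rewrite one_add_s; apply; lra.
have l_le : l <= 2 * s by rewrite /l -ss lnM ?posrE //; lra.
rewrite /DeltaN -/s -/l; split; first exact: divr_gt0.
  by rewrite ler_pdivrMr.
by rewrite -ss; field; rewrite gt_eqF.
Qed.

Lemma mean_le_of_drift (R : realFieldType) (T : finType) (pi f j d : T -> R) (E : R) :
  (forall x, 0 <= pi x) -> \sum_x pi x = 1 ->
  (forall x, f x <= j x + E + d x) -> \sum_x pi x * d x <= 0 ->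
  \sum_x pi x * f x <= \sum_x pi x * j x + E.
Proof.
move=> pi_ge0 pi_sum1 f_le mean_d_le0.
apply: le_trans (ler_sum _ (fun x _ => ler_wpM2l (pi_ge0 x) (f_le x))) _.
have -> : \sum_x pi x * (j x + E + d x)
    = \sum_x pi x * j x + E * \sum_x pi x + \sum_x pi x * d x.
  by rewrite mulr_sumr -!big_split /=; apply: eq_bigr => x _; ring.
by rewrite pi_sum1 mulr1 gerDl.
Qed.

Theorem lemma7 (R : realType) (N b M : nat) (alpha : R) (mu p : nat -> R)
    (route : cfg N b M -> option ('I_b * 'I_M) -> R) (pi : cfg N b M -> R) :
  let lam := lamN N alpha in
  let Delta := DeltaN R N in
  let eta := lam + kconst M mu p b * Delta in
  let h := fun x : R => Num.max (x - eta) 0 in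
  let g' := fun x : R => - (Num.max (x - eta) 0) / Delta in
  (2 <= N)%N -> (1 <= b)%N -> (1 <= M)%N ->
  0 < alpha < 2^-1 ->
  (forall m, (1 <= m <= M)%N -> 0 < mu m) ->
  (forall m, (1 <= m < M)%N -> 0 <= p m < 1) ->
  \sum_(1 <= m < M.+1) vv mu p m = 1 ->
  0 < xi M mu p < 1 ->
  valid_policy route ->
  irreducible (Qrate mu p lam route) ->
  stationary (Qrate mu p lam route) pi ->
  let J1 := \sum_x pi x *
      (g' (Ssum R x) * (lam * Ab route x - lam - Delta + D1 mu p x)
       * bool_ind (eta + (N%:R)^-1 < Ssum R x)) in
  \sum_x pi x * h (Ssum R x)
    <= J1 + (5 * mumax M mu + lam) / (Num.sqrt N%:R * ln (N%:R : R)).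
Proof.
move=> lam Delta eta h g' N_ge2 b_gt0 M_gt0 /andP [alpha_gt0 _] mu_gt0 p_prob
  sum_vv _ route_ok _ pi_stat; cbv zeta.
have N_gt0 : (0 < N)%N by apply: leq_trans N_ge2.
have [Delta_gt0 Delta_le2 ->] := DeltaN_facts R N_ge2.
have /andP [lam_ge0 lam_le1] := lamN_bounds N_gt0 (ltW alpha_gt0).
have [pi_ge0 [pi_sum1 _]] := pi_stat.
apply: (mean_le_of_drift pi_ge0 pi_sum1 (d := drift_minorant mu p lam eta Delta route)).
  move=> x; exact: drift_comparison.
exact: mean_drift_minorant_le0.
Qed.
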